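(* Let $X$ be a phylogenetic vertex of a quiver. Then: (i) $X$ has a primitive ancestor; (ii) all primitive ancestors of $X$ are isotypic to each other; (iii) every short full evolution for $X$ is universal; (iv) every vertex appearing in a short full evolution for $X$ is phylogenetic.
   Context: A quiver consists of a class of vertices and, for each ordered pair of vertices $(A,B)$, a set of edges $A\to B$ (loops and multiple edges allowed). An evolution of length $m\ge 0$ is a sequence $A_0\leftarrow A_1\leftarrow\cdots\leftarrow A_m$ of vertices together with edges $A_k\to A_{k-1}$ ($1\le k\le m$); $A_0$ is its initial and $A_m$ its terminal vertex. Write $A\le B$ ($A$ is an ancestor of $B$) if there is an evolution with initial vertex $A$ and terminal vertex $B$; $A,B$ are isotypic ($A\sim B$) if $A\le B$ and $B\le A$. A vertex $A$ is primitive if every ancestor of $A$ is isotypic to $A$. A full evolution for $X$ is an evolution with primitive initial vertex and terminal vertex $X$. The height $h(X)$ is the smallest length of a full evolution for $X$ ($\infty$ if none); a full evolution for $X$ is short if its length equals $h(X)$. An evolution $\alpha=(A_0\leftarrow\cdots\leftarrow A_m)$ embeds in $\beta=(B_0\leftarrow\cdots\leftarrow B_n)$ if $m\le n$ and there are $0\le r_0<\cdots<r_m\le n$ with $A_k\sim B_{r_k}$. A universal evolution for $X$ is a full evolution for $X$ embedding in every full evolution for $X$; $X$ is phylogenetic if one exists. *)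

From Stdlib Require Import Arith.

Set Implicit Arguments.

Record evolution (V : Type) (E : V -> V -> Type) := Evolution {
  ev_len : nat;
  ev_vert : nat -> V;
  ev_edge : forall k, k < ev_len -> E (ev_vert (S k)) (ev_vert k)
}.

Arguments ev_len {V E} e.
Arguments ev_vert {V E} e _.

Section Quiver.
Variables (V : Type) (E : V -> V -> Type).

Definition initial (a : evolution E) : V := ev_vert a 0.
Definition terminal (a : evolution E) : V := ev_vert a (ev_len a).

Definition ancestor (A B : V) : Prop :=
  exists a : evolution E, initial a = A /\ terminal a = B.

Definition isotypic (A B : V) : Prop := ancestor A B /\ ancestor B A.

Definition primitive (A : V) : Prop :=
  forall B, ancestor B A -> isotypic B A.

Definition full_evolution (X : V) (a : evolution E) : Prop :=
  primitive (initial a) /\ terminal a = X.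

(* short: a full evolution whose length equals the height h(X), i.e. the
   least length of a full evolution for X. *)
Definition short_evolution (X : V) (a : evolution E) : Prop :=
  full_evolution X a /\
  forall b : evolution E, full_evolution X b -> ev_len a <= ev_len b.

Definition embeds (a b : evolution E) : Prop :=
  ev_len a <= ev_len b /\
  exists r : nat -> nat,
    (forall i j, i < j -> j <= ev_len a -> r i < r j) /\
    r (ev_len a) <= ev_len b /\
    (forall k, k <= ev_len a -> isotypic (ev_vert a k) (ev_vert b (r k))).

Definition universal_evolution (X : V) (a : evolution E) : Prop :=
  full_evolution X a /\
  forall b : evolution E, full_evolution X b -> embeds a b.

Definition phylogenetic (X : V) : Prop :=
  exists a : evolution E, universal_evolution X a.

End Quiver.

(* If [u] is universal for [X], every full evolution [b] for [X] contains [u]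
   up to isotypy along a strictly increasing index map. Reading this off at the
   initial vertex of [b] shows that any primitive ancestor of [X] is isotypic to
   [initial u]. A short full evolution [a] has length at most that of [u], so
   the embedding of [u] into [a] is the identity on indices and [a] agrees with
   [u] vertexwise up to isotypy; hence [a] is universal too. Finally, a prefix
   [A_0 <- ... <- A_k] of a universal evolution is universal for [A_k]: any full
   evolution for [A_k], extended by the remaining part of [a], is a full
   evolution for [X], and the embedding of [a] into it lands in the first part on
   the indices [<= k], since it must leave room for the [len a - k] last ones. *)

From Stdlib Require Import Arith Lia.

Lemma incr_add_sub (r : nat -> nat) (n : nat) :
  (forall i j, i < j -> j <= n -> r i < r j) ->
  forall i j, i <= j -> j <= n -> r i + (j - i) <= r j.
Proof.
  intros Hr i j; induction j as [|j IH]; intros Hij Hjn.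
  - replace i with 0 by lia; lia.
  - destruct (Nat.eq_dec i (S j)) as [->|Hne]; [lia|].
    assert (r j < r (S j)) by (apply Hr; lia).
    specialize (IH ltac:(lia) ltac:(lia)); lia.
Qed.

Lemma incr_bounded_id (r : nat -> nat) (n : nat) :
  (forall i j, i < j -> j <= n -> r i < r j) -> r n <= n ->
  forall k, k <= n -> r k = k.
Proof.
  intros Hr Hn k Hk.
  pose proof (incr_add_sub r n Hr 0 k ltac:(lia) Hk).
  pose proof (incr_add_sub r n Hr k n Hk ltac:(lia)).
  lia.
Qed.

Section Evolutions.
Context {V : Type} {E : V -> V -> Type}.

Lemma evolution_segment (a : evolution E) i j : i <= j -> j <= ev_len a ->
  exists c : evolution E,
    ev_len c = j - i /\ forall t, ev_vert c t = ev_vert a (i + t).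
Proof.
  intros Hij Hj.
  assert (edge : forall k, k < j - i ->
            E (ev_vert a (i + S k)) (ev_vert a (i + k))).
  { intros k Hk; rewrite Nat.add_succ_r; apply (ev_edge a); lia. }
  exists (@Evolution V E (j - i) (fun t => ev_vert a (i + t)) edge); auto.
Qed.

Lemma evolution_cat (a b : evolution E) : terminal a = initial b ->
  exists c : evolution E, ev_len c = ev_len a + ev_len b /\
    (forall i, i <= ev_len a -> ev_vert c i = ev_vert a i) /\
    (forall i, ev_vert c (ev_len a + i) = ev_vert b i).
Proof.
  unfold terminal, initial; intros Hab.
  set (n := ev_len a) in *.
  set (f := fun i => if i <=? n then ev_vert a i else ev_vert b (i - n)).
  assert (f_left : forall i, i <= n -> f i = ev_vert a i).
  { intros i Hi; unfold f; destruct (Nat.leb_spec i n); [reflexivity|lia]. }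
  assert (f_right : forall i, n <= i -> f i = ev_vert b (i - n)).
  { intros i Hi; unfold f; destruct (Nat.leb_spec i n); [|reflexivity].
    replace i with n by lia; rewrite Nat.sub_diag; exact Hab. }
  assert (edge : forall k, k < n + ev_len b -> E (f (S k)) (f k)).
  { intros k Hk; destruct (le_lt_dec (S k) n) as [h|h].
    - rewrite (f_left (S k) h), (f_left k ltac:(lia)); apply (ev_edge a), h.
    - rewrite (f_right (S k) ltac:(lia)), (f_right k ltac:(lia)).
      replace (S k - n) with (S (k - n)) by lia; apply (ev_edge b); lia. }
  exists (@Evolution V E (n + ev_len b) f edge); simpl; repeat split; auto.
  intros i; rewrite f_right by lia; f_equal; lia.
Qed.

Lemma ancestor_refl (A : V) : ancestor E A A.
Proof.
  assert (edge : forall k, k < 0 -> E ((fun _ => A) (S k)) ((fun _ => A) k))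
    by (intros; lia).
  exists (@Evolution V E 0 (fun _ => A) edge); split; reflexivity.
Qed.

Lemma ancestor_trans (A B C : V) :
  ancestor E A B -> ancestor E B C -> ancestor E A C.
Proof.
  intros [a [Ha0 Ham]] [b [Hb0 Hbm]].
  destruct (evolution_cat a b) as [c [Hc [Hc_left Hc_right]]]; [congruence|].
  exists c; unfold initial, terminal in *; split.
  - rewrite Hc_left by lia; exact Ha0.
  - rewrite Hc, Hc_right; exact Hbm.
Qed.

Lemma ancestor_vert (a : evolution E) i j : i <= j -> j <= ev_len a ->
  ancestor E (ev_vert a i) (ev_vert a j).
Proof.
  intros Hij Hj; destruct (evolution_segment a i j Hij Hj) as [c [Hc Hcv]].
  exists c; unfold initial, terminal; rewrite Hc, !Hcv; split; f_equal; lia.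
Qed.

Lemma isotypic_sym A B : isotypic E A B -> isotypic E B A.
Proof. intros [HAB HBA]; split; assumption. Qed.

Lemma isotypic_trans A B C :
  isotypic E A B -> isotypic E B C -> isotypic E A C.
Proof. intros [] []; split; eapply ancestor_trans; eauto. Qed.

Lemma embeds_isotypic_vert (a b : evolution E) :
  embeds a b -> ev_len b <= ev_len a ->
  forall k, k <= ev_len a -> isotypic E (ev_vert a k) (ev_vert b k).
Proof.
  intros [_ [r [Hr [Hrn Hiso]]]] Hba k Hk.
  rewrite <- (incr_bounded_id r (ev_len a) Hr ltac:(lia) k Hk) at 2.
  auto.
Qed.

Lemma embeds_isotypic_l (a b c : evolution E) :
  ev_len a = ev_len b ->
  (forall k, k <= ev_len a -> isotypic E (ev_vert a k) (ev_vert b k)) ->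
  embeds b c -> embeds a c.
Proof.
  intros Hab Hiso [Hbc [r [Hr [Hrn Hbr]]]]; rewrite <- Hab in *.
  split; [assumption|]; exists r; split; [exact Hr|split; [exact Hrn|]].
  intros k Hk; apply isotypic_trans with (ev_vert b k); auto.
Qed.

Lemma full_evolution_prefix {X : V} (a : evolution E) k :
  full_evolution X a -> k <= ev_len a ->
  exists p : evolution E, full_evolution (ev_vert a k) p /\
    ev_len p = k /\ forall t, ev_vert p t = ev_vert a t.
Proof.
  intros [Ha0 _] Hk.
  destruct (evolution_segment a 0 k ltac:(lia) Hk) as [p [Hp Hpv]].
  rewrite Nat.sub_0_r in Hp.
  exists p; unfold full_evolution, initial, terminal in *.
  rewrite Hp, !Hpv; auto.
Qed.

Lemma full_evolution_extend {X : V} (a c : evolution E) k :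
  full_evolution X a -> k <= ev_len a -> full_evolution (ev_vert a k) c ->
  exists d : evolution E, full_evolution X d /\
    ev_len d = ev_len c + (ev_len a - k) /\
    forall i, i <= ev_len c -> ev_vert d i = ev_vert c i.
Proof.
  intros [_ HaX] Hk [Hc0 HcX].
  destruct (evolution_segment a k (ev_len a) Hk ltac:(lia)) as [s [Hs Hsv]].
  destruct (evolution_cat c s) as [d [Hd [Hd_left Hd_right]]].
  { rewrite HcX; unfold initial; rewrite Hsv; f_equal; lia. }
  exists d; unfold full_evolution, initial, terminal in *.
  rewrite Hd_left by lia; rewrite Hd, Hd_right, Hsv, Hs, <- HaX.
  split; [split; [exact Hc0|f_equal; lia]|split; [reflexivity|exact Hd_left]].
Qed.

Lemma universal_vert_phylogenetic (X : V) (a : evolution E) k :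
  universal_evolution X a -> k <= ev_len a -> phylogenetic E (ev_vert a k).
Proof.
  intros [Fa Ha] Hk.
  destruct (full_evolution_prefix a k Fa Hk) as [p [Fp [Hp Hpv]]].
  exists p; split; [exact Fp|]; intros c Fc.
  destruct (full_evolution_extend a c k Fa Hk Fc) as [d [Fd [Hd Hdv]]].
  destruct (Ha d Fd) as [_ [r [Hr [Hrn Hiso]]]].
  assert (r_prefix : forall i, i <= k -> r i <= ev_len c).
  { intros i Hi.
    pose proof (incr_add_sub r _ Hr i k Hi Hk).
    pose proof (incr_add_sub r _ Hr k (ev_len a) Hk ltac:(lia)); lia. }
  pose proof (incr_add_sub r _ Hr 0 k ltac:(lia) Hk).
  unfold embeds; rewrite Hp; split; [pose proof (r_prefix k (le_n k)); lia|].
  exists r; split; [|split].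
  - intros i j Hij Hj; apply Hr; lia.
  - apply r_prefix, le_n.
  - intros i Hi; rewrite Hpv, <- Hdv by auto; apply Hiso; lia.
Qed.

Section Universal.
Variables (X : V) (u : evolution E).
Hypothesis u_universal : universal_evolution X u.

Lemma primitive_ancestor_isotypic_initial A :
  primitive E A -> ancestor E A X -> isotypic E A (initial u).
Proof.
  destruct u_universal as [[Hu0 _] Hu]; intros HA [b [Hb0 HbX]].
  assert (Fb : full_evolution X b) by (split; [rewrite Hb0|]; assumption).
  destruct (Hu b Fb) as [_ [r [Hr [Hrn Hiso]]]].
  pose proof (incr_add_sub r _ Hr 0 (ev_len u) ltac:(lia) ltac:(lia)).
  apply Hu0, ancestor_trans with (ev_vert b (r 0)).
  - rewrite <- Hb0; apply ancestor_vert; lia.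
  - apply Hiso; lia.
Qed.

Lemma short_evolution_universal (a : evolution E) :
  short_evolution X a -> universal_evolution X a.
Proof.
  destruct u_universal as [Fu Hu]; intros [Fa Hshort].
  assert (Hua : embeds u a) by auto.
  assert (Hlen : ev_len u = ev_len a)
    by (destruct Hua; specialize (Hshort u Fu); lia).
  split; [exact Fa|]; intros b Fb.
  apply embeds_isotypic_l with u; auto.
  intros k Hk; apply isotypic_sym, embeds_isotypic_vert; auto; lia.
Qed.

End Universal.
End Evolutions.

Theorem theorem5p3 (V : Type) (E : V -> V -> Type) (X : V) :
  phylogenetic E X ->
  (exists A, primitive E A /\ ancestor E A X) /\
  (forall A B, primitive E A -> ancestor E A X ->
               primitive E B -> ancestor E B X -> isotypic E A B) /\
  (forall a : evolution E, short_evolution X a -> universal_evolution X a) /\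
  (forall a : evolution E, short_evolution X a ->
     forall k, k <= ev_len a -> phylogenetic E (ev_vert a k)).
Proof.
  intros [u Hu]; split; [|split; [|split]].
  - destruct Hu as [[Hu0 HuX] _].
    exists (initial u); split; [exact Hu0|]; exists u; auto.
  - intros A B HA HAX HB HBX.
    apply isotypic_trans with (initial u);
      [|apply isotypic_sym]; eapply primitive_ancestor_isotypic_initial; eauto.
  - intros a Ha; eapply short_evolution_universal; eauto.
  - intros a Ha k Hk.
    eapply universal_vert_phylogenetic, Hk.
    eapply short_evolution_universal; eauto.
Qed.
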